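(* Let $X$ be a regular ultrametric space with a Borel measure $\nu$, and let $\{\Psi_{Ij}\}$ be the ultrametric wavelets on $X$. Let $I_0\subset X$ be a ball with $\nu(I_0)>0$. Then for every complex number $u_0$ and every family of complex numbers $\{u_{Ij}\}$ (indexed like the wavelets) there exists a unique generalized function $u\in D'(X)$ such that $$u(\chi_{I_0})=u_0\,\nu(I_0),\qquad u\big(\overline{\Psi_{Ij}}\big)=u_{Ij}\quad\text{for all } I,j.$$
   Context: An ultrametric space $X$ is regular if: (1) the set of balls of nonzero diameter is finite or countable; (2) for every decreasing sequence of balls the diameters tend to zero; (3) every ball of nonzero diameter is a finite union of maximal subballs. $\nu$ is a $\sigma$-additive Borel measure on $X$. $\mathcal T(X)$ denotes the set of all balls of nonzero diameter together with the zero-diameter balls which are maximal subballs of balls of nonzero diameter, partially ordered by inclusion; the non-minimal vertices are the balls of nonzero diameter. For a ball $I$ of nonzero diameter, $V^0(I)$ is the space of linear combinations of characteristic functions of the maximal subballs of $I$ having zero mean with respect to $\nu$; $\{\Psi_{Ij}\}_j$ is a fixed orthonormal basis of $V^0(I)$ in $L^2(X,\nu)$ (for $j=1,\dots,p_I-1$, $p_I$ the number of maximal subballs of $I$, when these all have positive measure). The ultrametric wavelets are all $\Psi_{Ij}$ with $I$ running over balls of nonzero diameter. $\chi_I$ is the characteristic function of $I$. The test function space $D(X)$ is the space of locally constant compactly supported complex functions on $X$; it is filtered by the finite-dimensional spaces $D(\mathcal S)=\mathrm{span}\{\chi_J:J\in\mathcal S\}$ for finite subtrees $\mathcal S\subset\mathcal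 T(X)$ of regular type (closed under suprema of pairs, containing all balls between two of its comparable balls, and containing all maximal subballs of $I$ whenever it contains $I$ and one maximal subball of $I$), with a sequence converging iff it lies in some $D(\mathcal S)$ and converges there. $D'(X)$ is the space of linear functionals on $D(X)$ (generalized functions). A locally integrable function $g$ acts on test functions by $g(\varphi)=\int_X g\varphi\,d\nu$. *)

From HB Require Import structures.
From mathcomp Require Import all_boot all_order all_algebra finmap.
From mathcomp Require Import all_classical all_reals all_analysis.
From mathcomp Require Import complex.
Set Implicit Arguments. Unset Strict Implicit. Unset Printing Implicit Defensive.
Import Order.TTheory GRing.Theory Num.Theory numFieldTopology.Exports numFieldNormedType.Exports.
Local Open Scope ring_scope.
Local Open Scope classical_set_scope.

Section Ultrametric.
Context {R : realType} {T : Type}.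
Variable dist : T -> T -> R.

Definition ultrametric : Prop :=
  [/\ (forall x y, 0 <= dist x y),
      (forall x y, dist x y = 0 <-> x = y),
      (forall x y, dist x y = dist y x) &
      (forall x y z, dist x z <= Num.max (dist x y) (dist y z))].

Definition cball (x : T) (r : R) : set T := [set y | dist x y <= r].
Definition is_ball (B : set T) : Prop := exists x r, 0 <= r /\ B = cball x r.

Definition diam (B : set T) : R :=
  sup [set r | exists x y, B x /\ B y /\ r = dist x y].

Definition posball (B : set T) : Prop := is_ball B /\ diam B != 0.

Definition maxsub (J I : set T) : Prop :=
  [/\ is_ball J, J `<` I &
      forall K, is_ball K -> J `<=` K -> K `<=` I -> K = J \/ K = I].

Definition maxsubs (I : set T) : set (set T) := [set J | maxsub J I].

Definition vertex (J : set T) : Prop :=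
  posball J \/ [/\ is_ball J, diam J = 0 & exists I, posball I /\ maxsub J I].

Definition regular : Prop :=
  [/\ countable [set B | posball B],
      (forall B : nat -> set T, (forall n, is_ball (B n)) ->
          (forall n, B n.+1 `<` B n) ->
          (fun n => diam (B n)) @ \oo --> (0 : R)) &
      (forall I, posball I ->
          finite_set (maxsubs I) /\ \bigcup_(J in maxsubs I) J = I)].

Definition dopen (A : set T) : Prop :=
  forall x, A x -> exists2 e : R, 0 < e & [set y | dist x y < e] `<=` A.

Definition chi (A : set T) : T -> R[i] := \1_A.

(* test functions D(X): finite complex linear combinations of characteristic
   functions of vertices of T(X) (= union of the D(S), S finite subtrees) *)
Definition is_test (f : T -> R[i]) : Prop :=
  exists (n : nat) (c : nat -> R[i]) (J : nat -> set T),
    (forall k, (k < n)%N -> vertex (J k)) /\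
    f = (fun x => \sum_(k < n) c k * chi (J k) x).

Definition is_genfun (u : (T -> R[i]) -> R[i]) : Prop :=
  forall (a : R[i]) f g, is_test f -> is_test g ->
    u (fun x => a * f x + g x) = a * u f + u g.

End Ultrametric.

Section Measure.
Context {R : realType} {d : measure_display} {T : measurableType d}.
Variable dist : T -> T -> R.
Variable nu : {measure set T -> \bar R}.

Definition borel_of_dist : Prop :=
  forall A : set T, measurable A <-> <<s dopen dist >> A.

Definition cintegral (f : T -> R[i]) : R[i] :=
  Complex (fine (\int[nu]_x (complex.Re (f x))%:E)%E)
          (fine (\int[nu]_x (complex.Im (f x))%:E)%E).

Definition l2inner (f g : T -> R[i]) : R[i] := cintegral (fun x => f x * (g x)^*).

Definition V0 (I : set T) (f : T -> R[i]) : Prop :=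
  (exists c : set T -> R[i],
      forall x, f x = \sum_(J \in maxsubs dist I) c J * chi J x)
  /\ cintegral f = 0.

Definition nsub (I : set T) : nat := #|` fset_set (maxsubs dist I)|%fset.

Definition wavelet_basis (Psi : set T -> nat -> T -> R[i]) : Prop :=
  forall I, posball dist I ->
  [/\ (forall j, (j < (nsub I).-1)%N -> V0 I (Psi I j)),
      (forall j k, (j < (nsub I).-1)%N -> (k < (nsub I).-1)%N ->
          l2inner (Psi I j) (Psi I k) = (j == k)%:R) &
      (forall f, V0 I f -> exists a : nat -> R[i],
          forall x, f x = \sum_(j < (nsub I).-1) a j * Psi I j x)].

End Measure.

From Pilot Require Import Defs.
From HB Require Import structures.
From mathcomp Require Import all_boot all_order all_algebra finmap.
From mathcomp Require Import all_classical all_reals all_analysis.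
From mathcomp Require Import complex ring.
Import Order.TTheory GRing.Theory Num.Theory.
(* Re-imported so that [is_ball] denotes the Defs notion rather than the one of
   MathComp-Analysis. *)
Import Pilot.Defs.
Local Open Scope ring_scope.
Local Open Scope classical_set_scope.

(* Every test function is a finite combination of [chi I0] and of
   conjugate wavelets.  Indeed, if M is a maximal subball of L, then
   chi M - (nu M / nu L) chi L is a real element of V^0(L), hence a combination
   of conjugate wavelets, so chi M and chi L lie in the span together; by
   regularity, any two balls of nonzero diameter are joined through a common
   superball by finite chains of maximal subballs.  These generators are
   linearly independent: integrating a vanishing combination over X recovers
   the coefficient of chi I0, since wavelets have mean 0, and integrating it
   against Psi I j then recovers the coefficient of the conjugate of Psi I j,
   by orthonormality within a ball and, across distinct balls, because one
   wavelet is constant on the support of the other.  Hence prescribing the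
   values on these generators defines a unique linear functional on D(X). *)

Section UltrametricBalls.
Context {R : realType} {T : Type} {dist : T -> T -> R}.
Hypothesis um : ultrametric dist.

Lemma dist_ge0 x y : 0 <= dist x y. Proof. by case: um. Qed.
Lemma dist_eq0 x y : dist x y = 0 <-> x = y. Proof. by case: um. Qed.
Lemma distC x y : dist x y = dist y x. Proof. by case: um. Qed.
Lemma distxx x : dist x x = 0. Proof. exact/dist_eq0. Qed.

Lemma dist_ultra_le {x y z c} : dist x y <= c -> dist y z <= c -> dist x z <= c.
Proof.
move=> xy yz; apply: le_trans (_ : Num.max (dist x y) (dist y z) <= c).
  by case: um.
by rewrite ge_max xy yz.
Qed.

Lemma cball_recenter {x y r} : dist x y <= r -> cball dist x r = cball dist y r.
Proof.
move=> xy; apply/seteqP; split=> z /= hz; apply: dist_ultra_le hz => //.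
by rewrite distC.
Qed.

Lemma ball_nonempty {B} : is_ball dist B -> exists x, B x.
Proof. by case=> x [r [r0 ->]]; exists x; rewrite /cball /= distxx. Qed.

Lemma balls_nested {A B z} : is_ball dist A -> is_ball dist B -> A z -> B z ->
  A `<=` B \/ B `<=` A.
Proof.
move=> [a [r [_ ->]]] [b [s [_ ->]]] az bz.
rewrite (cball_recenter az) (cball_recenter bz) /cball.
have [rs|/ltW sr] := leP r s; [left|right] => y /= zy; exact: le_trans zy _.
Qed.

Lemma dist_le_diam {B x y} : is_ball dist B -> B x -> B y -> dist x y <= diam dist B.
Proof.
move=> [a [r [_ ->]]] ax ay; apply: ub_le_sup; last by exists x, y.
exists r => _ [u [v [au [av ->]]]]; apply: dist_ultra_le av.
by rewrite distC.
Qed.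

Lemma posball_dist {B} : posball dist B -> exists x y, [/\ B x, B y & 0 < dist x y].
Proof.
move=> [bB dB]; apply: contrapT => hB; move/eqP: dB; apply.
have [x Bx] := ball_nonempty bB.
apply/eqP; rewrite eq_le; apply/andP; split; last by rewrite -(distxx x) dist_le_diam.
apply: ge_sup; first by exists (dist x x), x, x.
move=> _ [u [v [Bu [Bv ->]]]]; rewrite leNgt; apply/negP => uv.
by apply: hB; exists u, v.
Qed.

Lemma posball_superset {K B} : posball dist K -> is_ball dist B -> K `<=` B ->
  posball dist B.
Proof.
move=> pK bB KB; split=> //; have [x [y [Kx Ky xy]]] := posball_dist pK.
by rewrite gt_eqF // (lt_le_trans xy) // dist_le_diam //; exact: KB.
Qed.

Lemma balls_bounded_above {P Q} : is_ball dist P -> is_ball dist Q ->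
  exists L, [/\ is_ball dist L, P `<=` L & Q `<=` L].
Proof.
move=> [p [r [r0 ->]]] [q [s [s0 ->]]].
pose t := Num.max (Num.max r s) (dist p q).
exists (cball dist p t); split.
- by exists p, t; rewrite /t !le_max r0.
- by move=> y; rewrite /cball /t /= => py; rewrite !le_max py.
- move=> y; rewrite /cball /t /= => qy.
  by apply: (@dist_ultra_le _ q); rewrite !le_max ?lexx ?qy ?orbT.
Qed.

Lemma maxsub_ball {J I} : maxsub dist J I -> is_ball dist J. Proof. by case. Qed.
Lemma maxsub_sub {J I} : maxsub dist J I -> J `<=` I. Proof. by case=> _ []. Qed.

Lemma maxsub_eq {M1 M2 I z} : maxsub dist M1 I -> maxsub dist M2 I ->
  M1 z -> M2 z -> M1 = M2.
Proof.
move=> h1 h2 z1 z2.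
have [s|s] := balls_nested (maxsub_ball h1) (maxsub_ball h2) z1 z2.
  case: h1 => _ _ /(_ M2 (maxsub_ball h2) s (maxsub_sub h2)) [->//|e].
  by case: h2 => _ [_ []]; rewrite e.
case: h2 => _ _ /(_ M1 (maxsub_ball h1) s (maxsub_sub h1)) [//|e].
by case: h1 => _ [_ []]; rewrite e.
Qed.

Lemma vertex_ball J : vertex dist J -> is_ball dist J.
Proof. by case=> [[]|[]]. Qed.

Lemma maxsub_vertex {J I} : posball dist I -> maxsub dist J I -> vertex dist J.
Proof.
move=> pI hJ; have [/eqP J0|J0] := boolP (diam dist J == 0).
  by right; split => //; [exact: maxsub_ball hJ|exists I].
by left; split => //; exact: maxsub_ball hJ.
Qed.

Hypothesis reg : regular dist.

Lemma maxsubs_finite {I} : posball dist I -> finite_set (maxsubs dist I).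
Proof. by move=> pI; case: reg => _ _ /(_ I pI) []. Qed.

Lemma maxsub_cover {I x} : posball dist I -> I x -> exists2 M, maxsub dist M I & M x.
Proof.
move=> pI Ix; case: reg => _ _ /(_ I pI) [_ cov].
have [M hM Mx] : (\bigcup_(J in maxsubs dist I) J) x by rewrite cov.
by exists M.
Qed.

Lemma exists_maxsub_above {K L} : is_ball dist K -> posball dist L ->
  K `<=` L -> K <> L -> exists2 M, maxsub dist M L & K `<=` M.
Proof.
move=> bK pL KL KnL; have [k Kk] := ball_nonempty bK.
have [M hM Mk] := maxsub_cover pL (KL _ Kk); exists M => //.
have [//|MK] := balls_nested bK (maxsub_ball hM) Kk Mk.
by case: hM => _ _ /(_ K bK MK KL) [->|].
Qed.

(* A descending chain of balls from L towards K along maximal subballs must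
   reach K, since diameters of strictly decreasing balls tend to 0 while every
   ball of the chain contains two points of K at positive distance. *)
Lemma maxsub_invariant (Q : set T -> Prop) {K L} :
  (forall L M, posball dist L -> maxsub dist M L -> (Q M <-> Q L)) ->
  posball dist K -> posball dist L -> K `<=` L -> (Q K <-> Q L).
Proof.
move=> step pK pL KL; apply: contrapT => hn.
pose bad B := [/\ posball dist B, K `<=` B & ~ (Q K <-> Q B)].
have next B : bad B -> {M | maxsub dist M B /\ bad M}.
  move=> [pB KB nB]; apply: cid.
  have KnB : K <> B by move=> e; apply: nB; rewrite -e.
  have [M hM KM] := exists_maxsub_above (proj1 pK) pB KB KnB.
  exists M; split => //; split => //.
    exact: posball_superset pK (maxsub_ball hM) KM.
  by have := step _ _ pB hM; tauto.
pose f B := if pselect (bad B) is left bB then sval (next B bB) else B.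
have f_bad B : bad B -> maxsub dist (f B) B /\ bad (f B).
  by move=> bB; rewrite /f; case: pselect => // {}bB; case: (next B bB).
pose B n := iter n f L.
have B_bad n : bad (B n) by elim: n => [|n IH]; [split|exact: (f_bad _ IH).2].
have B_ball n : is_ball dist (B n) by case: (B_bad n) => -[].
have B_lt n : B n.+1 `<` B n by case: (f_bad _ (B_bad n)) => -[].
have [x [y [Kx Ky xy]]] := posball_dist pK.
have /cvgrPdist_lt/(_ _ xy) [N _ /(_ N (leqnn N))] : (fun n => diam dist (B n)) @ \oo --> 0.
  by case: reg => _ + _; apply.
rewrite sub0r normrN ltNge => /negP; apply.
case: (B_bad N) => _ KB _.
by rewrite (le_trans (dist_le_diam (B_ball N) (KB _ Kx) (KB _ Ky))) ?ler_norm.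
Qed.

End UltrametricBalls.

Section SimpleIntegral.
Context {R : realType} {d : measure_display} {X : measurableType d}.
Variable nu : {measure set X -> \bar R}.

Definition fin_meas (A : set X) := measurable A /\ (nu A < +oo)%E.

Lemma integrable_indic_fin A : fin_meas A ->
  nu.-integrable setT (fun x => (\1_A x : R)%:E).
Proof.
move=> [mA fA]; apply/integrableP; split.
  exact/measurable_realfun.measurable_EFinP/measurable_realfun.measurable_indic.
rewrite (eq_integral (fun x => (\1_A x : R)%:E)); last first.
  by move=> x _; rewrite /= indicE ger0_norm.
by rewrite integral_indic // setIT.
Qed.

Lemma integral_sum_indic (s : seq (R * set X)) :
  (forall p, p \in s -> fin_meas p.2) ->
  nu.-integrable setT (fun x => (\sum_(p <- s) p.1 * \1_(p.2) x)%:E) /\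
  (\int[nu]_x (\sum_(p <- s) p.1 * \1_(p.2) x)%:E =
     (\sum_(p <- s) p.1 * fine (nu p.2))%:E)%E.
Proof.
elim: s => [|[a A] s IH] hs.
  have -> : (fun x => (\sum_(p <- [::] : seq (R * set X)) p.1 * \1_(p.2) x)%:E) =
            cst 0%E by apply: funext => x; rewrite big_nil.
  by rewrite big_nil integral0; split => //; exact: integrable0.
have [ints intsE] := IH (fun q qs => hs q (mem_behead (s := (a, A) :: s) qs)).
have [mA fA] := hs _ (mem_head _ _).
have iA : nu.-integrable setT (fun x => (a%:E * (\1_A x : R)%:E)%E).
  exact/integrableZl/integrable_indic_fin.
under eq_fun do rewrite big_cons EFinD EFinM.
split; first exact: integrableD.
rewrite integralD // integralZl ?integral_indic ?setIT //; last first.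
  exact: integrable_indic_fin.
by rewrite intsE big_cons EFinD EFinM fineK // ge0_fin_numE.
Qed.

Definition csimple (s : seq (R[i] * set X)) (x : X) : R[i] :=
  \sum_(p <- s) p.1 * chi p.2 x.

Definition fin_meas_seq (s : seq (R[i] * set X)) := forall p, p \in s -> fin_meas p.2.

Lemma chiE (A : set X) x : chi A x = (\1_A x : R)%:C%C.
Proof. by rewrite /chi !indicE; case: (x \in A). Qed.

Lemma csimple_Complex s x : csimple s x =
  Complex (\sum_(p <- s) complex.Re p.1 * \1_(p.2) x)
          (\sum_(p <- s) complex.Im p.1 * \1_(p.2) x).
Proof.
elim: s => [|[[a b] A] s IH]; first by rewrite /csimple !big_nil.
by rewrite /csimple !big_cons -/(csimple s x) IH chiE; simpc.
Qed.

Lemma cintegral_csimple s : fin_meas_seq s ->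
  cintegral nu (csimple s) = \sum_(p <- s) p.1 * (fine (nu p.2))%:C%C.
Proof.
move=> hs; rewrite /cintegral.
under eq_integral do rewrite csimple_Complex /=.
under [X in Complex _ (fine X)]eq_integral do rewrite csimple_Complex /=.
have intE (f : R[i] -> R) : (\int[nu]_x (\sum_(p <- s) f p.1 * \1_(p.2) x)%:E)%E =
    (\sum_(p <- s) f p.1 * fine (nu p.2))%:E.
  have hf : forall p, p \in [seq (f q.1, q.2) | q <- s] -> fin_meas p.2.
    by move=> p /mapP [q qs ->]; exact: hs.
  have := (integral_sum_indic _ hf).2; rewrite big_map => <-.
  by apply: eq_integral => x _; rewrite big_map.
rewrite !intE /=.
elim: s {hs intE} => [|[[a b] A] s IH]; first by rewrite !big_nil.
by rewrite !big_cons -IH /=; simpc.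
Qed.

Definition fin_simple (f : X -> R[i]) := exists2 s, fin_meas_seq s & f = csimple s.

Lemma fin_simple_csimple s : fin_meas_seq s -> fin_simple (csimple s).
Proof. by exists s. Qed.

Lemma csimple_lin (a : R[i]) s t :
  (fun x => a * csimple s x + csimple t x) =
  csimple ([seq (a * p.1, p.2) | p <- s] ++ t).
Proof.
apply: funext => x; rewrite /csimple big_cat big_map mulr_sumr /=.
by congr (_ + _); apply: eq_bigr => p _; rewrite mulrA.
Qed.

Lemma fin_meas_seq_lin (a : R[i]) s t : fin_meas_seq s -> fin_meas_seq t ->
  fin_meas_seq ([seq (a * p.1, p.2) | p <- s] ++ t).
Proof.
by move=> hs ht p; rewrite mem_cat => /orP[/mapP[q qs ->]|/ht//]; exact: hs qs.
Qed.

Lemma csimple_conj s :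
  (fun x => (csimple s x)^*%C) = csimple [seq ((p.1)^*%C, p.2) | p <- s].
Proof.
apply: funext => x; rewrite /csimple big_map rmorph_sum; apply: eq_bigr => p _.
by rewrite rmorphM /= chiE conjc_real.
Qed.

Lemma fin_meas_seq_conj s : fin_meas_seq s ->
  fin_meas_seq [seq ((p.1)^*%C, p.2) | p <- s].
Proof. by move=> hs p /mapP[q qs ->]; exact: hs qs. Qed.

Lemma fin_simple0 : fin_simple (fun=> 0).
Proof. by exists [::] => //; apply: funext => x; rewrite /csimple big_nil. Qed.

Lemma fin_simple_chi A : fin_meas A -> fin_simple (chi A).
Proof.
exists [:: (1, A)]; first by move=> p; rewrite inE => /eqP ->.
by apply: funext => x; rewrite /csimple big_seq1 mul1r.
Qed.

Lemma fin_simple_lin (a : R[i]) f g : fin_simple f -> fin_simple g ->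
  fin_simple (fun x => a * f x + g x).
Proof.
move=> [s hs ->] [t ht ->]; rewrite csimple_lin.
exact/fin_simple_csimple/fin_meas_seq_lin.
Qed.

Lemma fin_simple_conj f : fin_simple f -> fin_simple (fun x => (f x)^*%C).
Proof.
by move=> [s hs ->]; rewrite csimple_conj; exact/fin_simple_csimple/fin_meas_seq_conj.
Qed.

Lemma fin_simple_mul f g : fin_simple f -> fin_simple g -> fin_simple (fun x => f x * g x).
Proof.
move=> [s hs ->] [t ht ->].
exists [seq (p.1 * q.1, p.2 `&` q.2) | p <- s, q <- t].
  move=> _ /allpairsP[[p q] [ps qt ->]] /=.
  have [mp fp] := hs _ ps; have [mq _] := ht _ qt.
  split; first exact: measurableI.
  by apply: le_lt_trans fp; apply: le_measure; rewrite ?inE //; exact: measurableI.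
apply: funext => x; rewrite /csimple big_allpairs_dep mulr_suml; apply: eq_bigr => p _.
rewrite mulr_sumr; apply: eq_bigr => q _.
by rewrite !chiE indicI rmorphM /= mulrACA.
Qed.

Lemma cintegral_lin (a : R[i]) f g : fin_simple f -> fin_simple g ->
  cintegral nu (fun x => a * f x + g x) = a * cintegral nu f + cintegral nu g.
Proof.
move=> [s hs ->] [t ht ->]; rewrite csimple_lin !cintegral_csimple //; last first.
  exact: fin_meas_seq_lin.
rewrite big_cat big_map mulr_sumr /=; congr (_ + _).
by apply: eq_bigr => p _; rewrite mulrA.
Qed.

Lemma cintegral0 : cintegral nu (fun=> 0) = 0.
Proof.
have -> : (fun=> 0) = csimple [::] by apply: funext => x; rewrite /csimple big_nil.
by rewrite cintegral_csimple // big_nil.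
Qed.

Lemma cintegralZ (a : R[i]) f : fin_simple f ->
  cintegral nu (fun x => a * f x) = a * cintegral nu f.
Proof.
move=> hf; rewrite -[RHS]addr0 -cintegral0 -cintegral_lin //; last exact: fin_simple0.
by congr cintegral; apply: funext => x; rewrite addr0.
Qed.

Lemma cintegral_conj f : fin_simple f ->
  cintegral nu (fun x => (f x)^*%C) = (cintegral nu f)^*%C.
Proof.
move=> [s hs ->]; rewrite csimple_conj !cintegral_csimple //; last first.
  exact: fin_meas_seq_conj.
by rewrite big_map rmorph_sum; apply: eq_bigr => p _; rewrite rmorphM /= oppr0.
Qed.

Lemma cintegral_chi A : fin_meas A -> cintegral nu (chi A) = (fine (nu A))%:C%C.
Proof.
move=> hA; have -> : chi A = csimple [:: (1, A)].
  by apply: funext => x; rewrite /csimple big_seq1 mul1r.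
by rewrite cintegral_csimple ?big_seq1 ?mul1r // => p; rewrite inE => /eqP ->.
Qed.

Lemma fin_simple_sum {I : eqType} (r : seq (R[i] * I)) (F : I -> X -> R[i]) :
  (forall p, p \in r -> fin_simple (F p.2)) ->
  fin_simple (fun x => \sum_(p <- r) p.1 * F p.2 x).
Proof.
elim: r => [|p r IH] hr.
  by under eq_fun do rewrite big_nil; exact: fin_simple0.
under eq_fun do rewrite big_cons.
apply: fin_simple_lin; first by apply: hr; rewrite mem_head.
by apply: IH => q qr; apply: hr; rewrite in_cons qr orbT.
Qed.

Lemma cintegral_sum {I : eqType} (r : seq (R[i] * I)) (F : I -> X -> R[i]) :
  (forall p, p \in r -> fin_simple (F p.2)) ->
  cintegral nu (fun x => \sum_(p <- r) p.1 * F p.2 x) =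
  \sum_(p <- r) p.1 * cintegral nu (F p.2).
Proof.
elim: r => [|p r IH] hr.
  by under eq_fun do rewrite big_nil; rewrite cintegral0 big_nil.
have hr' q : q \in r -> fin_simple (F q.2) by move=> qr; apply: hr; rewrite in_cons qr orbT.
under eq_fun do rewrite big_cons.
rewrite cintegral_lin ?IH ?big_cons //; first by apply: hr; rewrite mem_head.
exact: fin_simple_sum.
Qed.

End SimpleIntegral.

Section BorelBalls.
Context {R : realType} {d : measure_display} {X : measurableType d}.
Context {dist : X -> X -> R} {nu : {measure set X -> \bar R}}.
Hypotheses (um : ultrametric dist) (borel : borel_of_dist dist).

Lemma dopen_measurable A : dopen dist A -> measurable A.
Proof. by move=> oA; apply/(borel A); exact: sub_sigma_algebra. Qed.

(* A ball of radius r > 0 is open; a ball of radius 0 is a point, whose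
   complement is open. *)
Lemma ball_measurable B : is_ball dist B -> measurable B.
Proof.
move=> [x [r [r0 ->]]]; have [rp|r_le0] := ltP 0 r.
  apply: dopen_measurable => y; rewrite /cball /= => xy; exists r => // z /= yz.
  exact: (dist_ultra_le um xy (ltW yz)).
rewrite -[cball _ _ _]setCK; apply/measurableC/dopen_measurable => y.
rewrite /cball /= => nxy.
have xy : 0 < dist x y by rewrite (le_lt_trans r0) // ltNge; apply/negP.
exists (dist x y) => // z /= yz xz.
have xz0 : x = z.
  by apply/(dist_eq0 um)/eqP; rewrite eq_le dist_ge0 // andbT (le_trans xz).
by move: yz; rewrite -xz0 (distC um) ltxx.
Qed.

Hypothesis pfin : forall I, posball dist I -> (nu I < +oo)%E.

Lemma vertex_fin_meas {J} : vertex dist J -> fin_meas nu J.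
Proof.
move=> vJ; split; first exact/ball_measurable/vertex_ball.
case: vJ => [/pfin //|[bJ _ [I [pI /maxsub_sub JI]]]].
apply: le_lt_trans (pfin _ pI); apply: le_measure; rewrite ?inE //.
  exact: ball_measurable.
exact/ball_measurable/(proj1 pI).
Qed.

End BorelBalls.

Section MaxsubSums.
Context {R : realType} {T : Type} {dist : T -> T -> R}.

Lemma chi_in {A : set T} {x} : A x -> chi A x = 1 :> R[i].
Proof. by move=> Ax; rewrite /chi indicE mem_set. Qed.

Lemma chi_out {A : set T} {x} : ~ A x -> chi A x = 0 :> R[i].
Proof. by move=> Ax; rewrite /chi indicE memNset. Qed.

Lemma sum_maxsubs_out I (c : set T -> R[i]) x : ~ I x ->
  \sum_(J \in maxsubs dist I) c J * chi J x = 0.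
Proof.
move=> Ix; rewrite fsbig1 // => J /maxsub_sub JI.
by rewrite chi_out ?mulr0 // => /JI.
Qed.

Hypotheses (um : ultrametric dist) (reg : regular dist).

Lemma sum_maxsubs_in {I M} {c : set T -> R[i]} {x} :
  posball dist I -> maxsub dist M I -> M x ->
  \sum_(J \in maxsubs dist I) c J * chi J x = c M.
Proof.
move=> pI hM Mx; have fin := maxsubs_finite reg pI.
rewrite (fsbigD1 M) //= chi_in // mulr1 fsbig1 ?addr0 // => J [hJ JM].
by rewrite chi_out ?mulr0 // => Jx; apply: JM (maxsub_eq um hJ hM Jx Mx).
Qed.

End MaxsubSums.

Lemma sum_pairs_by_key {R : comNzRingType} {I : eqType} (r : seq (R * I)) (w : I -> R) :
  \sum_(p <- r) p.1 * w p.2 =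
  \sum_(m <- undup [seq p.2 | p <- r]) (\sum_(p <- r) p.1 * (p.2 == m)%:R) * w m.
Proof.
under [RHS]eq_bigr do rewrite mulr_suml.
rewrite exchange_big /= [LHS]big_seq [RHS]big_seq; apply: eq_bigr => p pr.
have pU : p.2 \in undup [seq q.2 | q <- r] by rewrite mem_undup; apply: map_f.
rewrite (bigD1_seq p.2) ?undup_uniq //= eqxx mulr1 big1 ?addr0 // => m /negbTE.
by rewrite eq_sym => ->; rewrite mulr0 mul0r.
Qed.

Section TestFunctions.
Context {R : realType} {T : Type} {dist : T -> T -> R}.

Lemma is_test0 : is_test dist (fun=> 0).
Proof.
exists 0%N, (fun=> 0), (fun=> set0); split => //.
by apply: funext => x; rewrite big_ord0.
Qed.

Lemma genfun0 {u} : is_genfun dist u -> u (fun=> 0) = 0.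
Proof.
move=> gu; have := gu 1 _ _ is_test0 is_test0.
have -> : (fun x : T => 1 * (0 : R[i]) + 0) = (fun=> 0).
  by apply: funext => x; rewrite mulr0 addr0.
by rewrite mul1r => /esym/eqP; rewrite -subr_eq0 addrK => /eqP.
Qed.

End TestFunctions.

Section SimpleTestFunctions.
Context {R : realType} {d : measure_display} {X : measurableType d}.
Context {dist : X -> X -> R}.

Lemma is_test_csimple s : (forall p, p \in s -> vertex dist p.2) ->
  is_test dist (csimple s).
Proof.
move=> hs; exists (size s), (fun k => (nth (0, set0) s k).1), (fun k => (nth (0, set0) s k).2).
split; first by move=> k ks; apply: hs; exact: mem_nth.
by apply: funext => x; rewrite /csimple (big_nth (0, set0)) big_mkord.
Qed.

Lemma is_testP f : is_test dist f ->
  exists2 s, (forall p, p \in s -> vertex dist p.2) & f = csimple s.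
Proof.
move=> [n [c [J [hJ ->]]]]; exists [seq (c k, J k) | k <- index_iota 0 n].
  by move=> p /mapP[k]; rewrite mem_index_iota => /andP[_ kn] ->; exact: hJ.
by apply: funext => x; rewrite /csimple big_map big_mkord.
Qed.

Lemma is_test_lin (a : R[i]) f g : is_test dist f -> is_test dist g ->
  is_test dist (fun x => a * f x + g x).
Proof.
move=> /is_testP[s hs ->] /is_testP[t ht ->]; rewrite csimple_lin.
by apply: is_test_csimple => p; rewrite mem_cat => /orP[/mapP[q qs ->]|/ht//]; exact: hs qs.
Qed.

End SimpleTestFunctions.

Definition wavelet_idx {R : realType} {d : measure_display} {X : measurableType d}
  (dist : X -> X -> R) (I : set X) (j : nat) :=
  posball dist I /\ (j < (nsub dist I).-1)%N.

Section Wavelets.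
Context {R : realType} {d : measure_display} {X : measurableType d}.
Context {dist : X -> X -> R} {nu : {measure set X -> \bar R}}.
Context {Psi : set X -> nat -> X -> R[i]}.
Hypotheses (um : ultrametric dist) (reg : regular dist) (borel : borel_of_dist dist).
Hypothesis pfin : forall I, posball dist I -> (nu I < +oo)%E.
Hypothesis wb : wavelet_basis dist nu Psi.

Lemma wavelet_V0 {I j} : wavelet_idx dist I j -> V0 dist nu I (Psi I j).
Proof. by move=> [pI jI]; case: (wb _ pI) => + _ _; apply. Qed.

Lemma wavelet_csimple {I j} : wavelet_idx dist I j ->
  exists2 s, (forall p, p \in s -> maxsub dist p.2 I) & Psi I j = csimple s.
Proof.
move=> wIj; have [[c cE] _] := wavelet_V0 wIj.
have fin := maxsubs_finite reg (proj1 wIj).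
exists [seq (c J, J) | J <- fset_set (maxsubs dist I)].
  by move=> _ /mapP[J + ->]; rewrite in_fset_set // inE.
by apply: funext => x; rewrite cE fsbig_finite // /csimple big_map.
Qed.

Lemma wavelet_fin_simple {I j} : wavelet_idx dist I j -> fin_simple nu (Psi I j).
Proof.
move=> wIj; have [s sI ->] := wavelet_csimple wIj; exists s => // p /sI hp.
apply: (vertex_fin_meas um borel pfin); exact: maxsub_vertex (proj1 wIj) hp.
Qed.

Lemma cintegral_wavelet {I j} : wavelet_idx dist I j -> cintegral nu (Psi I j) = 0.
Proof. by move/wavelet_V0 => []. Qed.

Lemma wavelet_out {I j} : wavelet_idx dist I j -> forall x, ~ I x -> Psi I j x = 0.
Proof.
by move/wavelet_V0 => [[c cE] _] x Ix; rewrite cE; exact: sum_maxsubs_out.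
Qed.

Lemma wavelet_const_sub {I j K} : wavelet_idx dist I j -> is_ball dist K ->
  K `<=` I -> K <> I -> exists k, forall x, K x -> Psi I j x = k.
Proof.
move=> wIj bK KI KnI; have [[c cE] _] := wavelet_V0 wIj.
have [M hM KM] := exists_maxsub_above um reg bK (proj1 wIj) KI KnI.
by exists (c M) => x Kx; rewrite cE (sum_maxsubs_in um reg (proj1 wIj) hM (KM _ Kx)).
Qed.

Lemma mul_const_on (A : set X) (g h : X -> R[i]) k :
  (forall x, A x -> g x = k) -> (forall x, ~ A x -> h x = 0) ->
  (fun x => g x * h x) = (fun x => k * h x).
Proof.
move=> gk h0; apply: funext => x; have [/gk ->//|/h0 ->] := pselect (A x).
by rewrite !mulr0.
Qed.

(* Either the balls are disjoint, or one factor is constant on the support of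
   the other, whose integral is 0. *)
Lemma wavelets_orthogonal I j I' j' : wavelet_idx dist I j -> wavelet_idx dist I' j' ->
  I' != I -> cintegral nu (fun x => (Psi I' j' x)^*%C * Psi I j x) = 0.
Proof.
move=> wIj wIj' I'I; have [pI _] := wIj; have [pI' _] := wIj'.
have [[z [Iz I'z]]|disj] := pselect (exists z, I z /\ I' z); last first.
  rewrite (@mul_const_on I _ _ 0); last exact: wavelet_out wIj.
    by rewrite cintegralZ ?mul0r //; exact: wavelet_fin_simple.
  by move=> x Ix; rewrite (wavelet_out wIj') ?rmorph0 // => I'x; apply: disj; exists x.
have [II'|I'I_sub] := balls_nested um (proj1 pI) (proj1 pI') Iz I'z.
  have [k kE] := wavelet_const_sub wIj' (proj1 pI) II' (nesym (elimN eqP I'I)).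
  rewrite (@mul_const_on I _ _ k^*%C); last exact: wavelet_out wIj.
    by rewrite cintegralZ ?cintegral_wavelet ?mulr0 //; exact: wavelet_fin_simple.
  by move=> x /kE ->.
have [k kE] := wavelet_const_sub wIj (proj1 pI') I'I_sub (elimN eqP I'I).
under eq_fun do rewrite mulrC.
rewrite (@mul_const_on I' _ _ k); last by move=> x I'x; rewrite (wavelet_out wIj') ?rmorph0.
  rewrite cintegralZ ?cintegral_conj ?cintegral_wavelet ?rmorph0 ?mulr0 //.
    exact: wavelet_fin_simple.
  exact/fin_simple_conj/wavelet_fin_simple.
by move=> x /kE.
Qed.

Lemma wavelet_orthonormal I j I' j' : wavelet_idx dist I j -> wavelet_idx dist I' j' ->
  cintegral nu (fun x => (Psi I' j' x)^*%C * Psi I j x) = ((I' == I) && (j' == j))%:R.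
Proof.
move=> wIj wIj'; case: (eqVneq I' I) => [eI|I'I] /=; last exact: wavelets_orthogonal.
subst I'; have -> : (fun x => (Psi I j' x)^*%C * Psi I j x) =
                    (fun x => (Psi I j' x * (Psi I j x)^*%C)^*%C).
  by apply: funext => x; rewrite rmorphM /= conjcK.
rewrite cintegral_conj; last first.
  by apply: fin_simple_mul; [|apply: fin_simple_conj]; exact: wavelet_fin_simple.
case: (wb _ (proj1 wIj)) => _ + _ => /(_ j' j (proj2 wIj') (proj2 wIj)).
by rewrite /l2inner => ->; rewrite conjc_nat.
Qed.

End Wavelets.

Section Span.
Context {R : realType} {d : measure_display} {X : measurableType d}.
Variables (dist : X -> X -> R) (nu : {measure set X -> \bar R}).
Variables (Psi : set X -> nat -> X -> R[i]) (I0 : set X).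
Hypotheses (um : ultrametric dist) (reg : regular dist) (borel : borel_of_dist dist).
Hypothesis pfin : forall I, posball dist I -> (nu I < +oo)%E.
Hypothesis wb : wavelet_basis dist nu Psi.
Hypotheses (vI0 : vertex dist I0) (nI0 : (0 < nu I0)%E).

(* [None] indexes [chi I0] and [Some (I, j)] the conjugate wavelet. *)
Definition basis_idx (m : option (set X * nat)) : Prop :=
  if m is Some (B, j) then wavelet_idx dist B j else True.

Definition basis_fun (m : option (set X * nat)) : X -> R[i] :=
  if m is Some (B, j) then fun x => (Psi B j x)^*%C else chi I0.

Definition comb (r : seq (R[i] * option (set X * nat))) (x : X) : R[i] :=
  \sum_(p <- r) p.1 * basis_fun p.2 x.

Definition basis_seq (r : seq (R[i] * option (set X * nat))) :=
  forall p, p \in r -> basis_idx p.2.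

Definition in_span (f : X -> R[i]) := exists2 r, basis_seq r & f = comb r.

Definition coef (r : seq (R[i] * option (set X * nat))) m :=
  \sum_(p <- r) p.1 * (p.2 == m)%:R.

Lemma basis_fin_simple m : basis_idx m -> fin_simple nu (basis_fun m).
Proof.
case: m => [[B j]|] /= hm.
  exact/fin_simple_conj/(wavelet_fin_simple um reg borel pfin wb).
exact/fin_simple_chi/(vertex_fin_meas um borel pfin).
Qed.

Lemma cintegral_basis_fun m : basis_idx m ->
  cintegral nu (basis_fun m) = (m == None)%:R * (fine (nu I0))%:C%C.
Proof.
case: m => [[B j]|] /= hm; last first.
  by rewrite mul1r (cintegral_chi _ _ (vertex_fin_meas um borel pfin vI0)).
rewrite mul0r cintegral_conj ?(cintegral_wavelet wb hm) ?rmorph0 //.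
exact: (wavelet_fin_simple um reg borel pfin wb hm).
Qed.

Lemma cintegral_comb {r} : basis_seq r ->
  cintegral nu (comb r) = coef r None * (fine (nu I0))%:C%C.
Proof.
move=> hr; rewrite cintegral_sum; last by move=> p /hr /basis_fin_simple.
rewrite /coef mulr_suml; apply: eq_big_seq => p /hr hp.
by rewrite cintegral_basis_fun // mulrA.
Qed.

Lemma cintegral_comb_wavelet {r I j} : basis_seq r -> wavelet_idx dist I j ->
  cintegral nu (fun x => comb r x * Psi I j x) =
  coef r None * cintegral nu (fun x => chi I0 x * Psi I j x) + coef r (Some (I, j)).
Proof.
move=> hr wIj; have fPsi := wavelet_fin_simple um reg borel pfin wb wIj.
under eq_fun do rewrite /comb mulr_suml; under eq_fun do under eq_bigr do rewrite -mulrA.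
rewrite (@cintegral_sum _ _ _ _ _ _ (fun m x => basis_fun m x * Psi I j x)); last first.
  by move=> p /hr /basis_fin_simple ?; exact: fin_simple_mul.
rewrite /coef !mulr_suml -big_split /=; apply: eq_big_seq => p /hr.
case: p => a [[B j']|] /= hp; last by rewrite mulr1 mulr0 addr0.
by rewrite (wavelet_orthonormal um reg borel pfin wb) // mulr0 mul0r add0r.
Qed.

Lemma nu_I0_neq0 : (fine (nu I0))%:C%C != 0 :> R[i].
Proof.
have [_ fI0] := vertex_fin_meas um borel pfin vI0.
by apply/eqP => -[] /eqP; rewrite gt_eqF // fine_gt0 // nI0 fI0.
Qed.

(* Integrating against [1] and against each [Psi I j] recovers the coefficients. *)
Lemma comb_eq0_coef {r} : basis_seq r -> comb r = (fun=> 0) ->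
  forall m, basis_idx m -> coef r m = 0.
Proof.
move=> hr r0.
have cN : coef r None = 0.
  apply/eqP; rewrite -(mulIr_eq0 _ (mulIf nu_I0_neq0)) -cintegral_comb // r0.
  by rewrite cintegral0.
case=> [[B j]|] // wBj; have := cintegral_comb_wavelet hr wBj.
rewrite r0 cN mul0r add0r => <-.
by under eq_fun do rewrite mul0r; rewrite cintegral0.
Qed.

Definition comb_val (val : option (set X * nat) -> R[i]) r :=
  \sum_(p <- r) p.1 * val p.2.

Lemma comb_eq0_val val r : basis_seq r -> comb r = (fun=> 0) -> comb_val val r = 0.
Proof.
move=> hr r0; rewrite /comb_val sum_pairs_by_key big1_seq // => m /andP[_].
rewrite mem_undup => /mapP[p /hr hp ->].
by move: (comb_eq0_coef hr r0 _ hp); rewrite /coef => ->; rewrite mul0r.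
Qed.

Lemma comb_cons p r : comb (p :: r) = (fun x => p.1 * basis_fun p.2 x + comb r x).
Proof. by apply: funext => x; rewrite /comb big_cons. Qed.

Lemma basis_seq_cons p r : basis_seq (p :: r) -> basis_idx p.2 /\ basis_seq r.
Proof.
move=> hr; split; first by apply: hr; rewrite mem_head.
by move=> q qr; apply: hr; rewrite in_cons qr orbT.
Qed.

Lemma in_span0 : in_span (fun=> 0).
Proof. by exists [::] => //; apply: funext => x; rewrite /comb big_nil. Qed.

Definition comb_lin (a : R[i]) (r t : seq (R[i] * option (set X * nat))) :=
  [seq (a * p.1, p.2) | p <- r] ++ t.

Lemma comb_linE a r t : comb (comb_lin a r t) = (fun x => a * comb r x + comb t x).
Proof.
apply: funext => x; rewrite /comb big_cat big_map mulr_sumr /=.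
by congr (_ + _); apply: eq_bigr => p _; rewrite mulrA.
Qed.

Lemma comb_val_linE val a r t :
  comb_val val (comb_lin a r t) = a * comb_val val r + comb_val val t.
Proof.
rewrite /comb_val big_cat big_map mulr_sumr /=.
by congr (_ + _); apply: eq_bigr => p _; rewrite mulrA.
Qed.

Lemma basis_seq_lin a r t : basis_seq r -> basis_seq t -> basis_seq (comb_lin a r t).
Proof.
by move=> hr ht p; rewrite mem_cat => /orP[/mapP[q qr ->]|/ht//]; exact: hr qr.
Qed.

Lemma in_span_lin (a : R[i]) {f g} : in_span f -> in_span g ->
  in_span (fun x => a * f x + g x).
Proof.
move=> [r hr ->] [t ht ->]; rewrite -comb_linE.
by exists (comb_lin a r t) => //; exact: basis_seq_lin.
Qed.

Lemma in_span_scale (a : R[i]) f : in_span f -> in_span (fun x => a * f x).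
Proof.
move=> hf; have := in_span_lin a hf in_span0.
by congr in_span; apply: funext => x; rewrite addr0.
Qed.

Lemma in_span_basis m : basis_idx m -> in_span (basis_fun m).
Proof.
exists [:: (1, m)]; first by move=> p; rewrite inE => /eqP ->.
by apply: funext => x; rewrite /comb big_seq1 mul1r.
Qed.

Lemma in_span_conj_V0 {L f} : posball dist L -> V0 dist nu L f ->
  in_span (fun x => (f x)^*%C).
Proof.
move=> pL fV0; case: (wb _ pL) => _ _ /(_ f fV0) [a aE].
exists [seq ((a j)^*%C, Some (L, j)) | j <- index_iota 0 (nsub dist L).-1].
  by move=> p /mapP[j]; rewrite mem_index_iota => /andP[_ jL] ->; split.
apply: funext => x; rewrite aE rmorph_sum /comb big_map big_mkord.
by apply: eq_bigr => j _; rewrite rmorphM.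
Qed.

Hypothesis mpos : forall I J, posball dist I -> maxsub dist J I -> (0 < nu J)%E.

Lemma maxsub_fine_gt0 {L M} : posball dist L -> maxsub dist M L ->
  0 < fine (nu M) <= fine (nu L).
Proof.
move=> pL hM; have [mM fM] := vertex_fin_meas um borel pfin (maxsub_vertex pL hM).
have [mL fL] : fin_meas nu L by exact: (vertex_fin_meas um borel pfin (or_introl pL)).
rewrite fine_gt0 ?(mpos _ _ pL hM) ?fM //=.
by apply: fine_le; rewrite ?ge0_fin_numE ?le_measure ?inE //; exact: maxsub_sub hM.
Qed.

Lemma V0_chi_maxsub {L M} : posball dist L -> maxsub dist M L ->
  V0 dist nu L (fun x => chi M x - (fine (nu M) / fine (nu L))%:C%C * chi L x).
Proof.
move=> pL hM; set c := (_ / _)%:C%C.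
have Mfin := vertex_fin_meas um borel pfin (maxsub_vertex pL hM).
have Lfin : fin_meas nu L by exact: (vertex_fin_meas um borel pfin (or_introl pL)).
have /andP[M0 ML] := maxsub_fine_gt0 pL hM.
have nuL0 : fine (nu L) != 0 by rewrite gt_eqF // (lt_le_trans M0 ML).
split.
  exists (fun J => (J == M)%:R - c) => x; have [Lx|Lx] := pselect (L x); last first.
    by rewrite sum_maxsubs_out // !chi_out ?mulr0 ?subr0 // => /(maxsub_sub hM).
  have [J hJ Jx] := maxsub_cover reg pL Lx.
  rewrite (sum_maxsubs_in um reg pL hJ Jx) (chi_in Lx) mulr1.
  case: (eqVneq J M) => [<-|JM]; first by rewrite chi_in.
  by rewrite chi_out // => Mx; move/eqP: JM; apply; exact: (maxsub_eq um hJ hM Jx Mx).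
have -> : (fun x => chi M x - c * chi L x) = (fun x => (- c) * chi L x + chi M x).
  by apply: funext => x; rewrite addrC mulNr.
rewrite cintegral_lin; try exact: fin_simple_chi.
by rewrite !cintegral_chi // /c mulNr -rmorphM /= mulfVK // addNr.
Qed.

(* [chi M] and [chi L] differ by a real element of [V0 L], i.e. a combination
   of conjugate wavelets. *)
Lemma in_span_chi_maxsub L M : posball dist L -> maxsub dist M L ->
  in_span (chi M) <-> in_span (chi L).
Proof.
move=> pL hM; set c := (fine (nu M) / fine (nu L))%:C%C.
have := in_span_conj_V0 pL (V0_chi_maxsub pL hM).
have -> : (fun x => (chi M x - c * chi L x)^*%C) = (fun x => (- c) * chi L x + chi M x).
  by apply: funext => x; rewrite !chiE /c; simpc; rewrite /= oppr0 addrC.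
move=> hV; have c0 : c != 0.
  have /andP[M0 ML] := maxsub_fine_gt0 pL hM.
  by apply/eqP => -[] /eqP; rewrite mulf_eq0 invr_eq0 !gt_eqF // (lt_le_trans M0 ML).
split=> hS.
  have -> : chi L = (fun x => c^-1 * ((-1) * ((- c) * chi L x + chi M x) + chi M x)).
    by apply: funext => x; rewrite mulN1r mulNr opprD opprK addrNK mulKf.
  exact/in_span_scale/in_span_lin.
have -> : chi M = (fun x => c * chi L x + ((- c) * chi L x + chi M x)).
  by apply: funext => x; ring.
exact: in_span_lin.
Qed.

Lemma in_span_chi_vertex J : vertex dist J -> in_span (chi J).
Proof.
have [Q pQ SQ] : exists2 Q, posball dist Q & in_span (chi Q).
  case: vI0 => [pI0|[_ _ [P [pP hI0]]]].
    by exists I0 => //; exact: (in_span_basis None).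
  by exists P => //; apply/(in_span_chi_maxsub _ _ pP hI0); exact: (in_span_basis None).
have span_pos P : posball dist P -> in_span (chi P).
  move=> pP; have [L [bL QL PL]] := balls_bounded_above um (proj1 pQ) (proj1 pP).
  have pL := posball_superset um pQ bL QL.
  have chain := maxsub_invariant um reg (fun B => in_span (chi B)) in_span_chi_maxsub.
  by apply/(chain _ _ pP pL PL)/(chain _ _ pQ pL QL).
case=> [/span_pos //|[_ _ [P [pP hJ]]]].
exact/(in_span_chi_maxsub _ _ pP hJ)/span_pos.
Qed.

Lemma in_span_test f : is_test dist f -> in_span f.
Proof.
move=> /is_testP[s]; elim: s f => [|p s IH] f hs ->.
  suff -> : csimple [::] = (fun=> 0) :> (X -> R[i]) by exact: in_span0.
  by apply: funext => x; rewrite /csimple big_nil.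
have -> : csimple (p :: s) = (fun x => p.1 * chi p.2 x + csimple s x).
  by apply: funext => x; rewrite /csimple big_cons.
apply: in_span_lin; first by apply/in_span_chi_vertex/hs; rewrite mem_head.
by apply: IH => // q qs; apply: hs; rewrite in_cons qs orbT.
Qed.

Lemma is_test_basis m : basis_idx m -> is_test dist (basis_fun m).
Proof.
case: m => [[B j] wBj|_] /=; last first.
  have -> : chi I0 = csimple [:: (1 : R[i], I0)].
    by apply: funext => x; rewrite /csimple big_seq1 mul1r.
  by apply: is_test_csimple => p; rewrite inE => /eqP ->.
have [s sB ->] := wavelet_csimple reg wb wBj; rewrite csimple_conj.
apply: is_test_csimple => q /mapP[p /sB pB ->].
exact: maxsub_vertex (proj1 wBj) pB.
Qed.

Lemma is_test_comb r : basis_seq r -> is_test dist (comb r).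
Proof.
elim: r => [_|p r IH /basis_seq_cons[hp hr]].
  have -> : comb [::] = csimple [::] by apply: funext => x; rewrite /comb /csimple !big_nil.
  by apply: is_test_csimple.
by rewrite comb_cons; apply: is_test_lin; [exact: is_test_basis|exact: IH].
Qed.

Lemma comb_val_eq val r r' : basis_seq r -> basis_seq r' -> comb r = comb r' ->
  comb_val val r = comb_val val r'.
Proof.
move=> hr hr' rr'; apply/eqP; rewrite -subr_eq0 addrC -mulN1r; apply/eqP.
rewrite -comb_val_linE; apply: comb_eq0_val; first exact: basis_seq_lin.
by rewrite comb_linE rr'; apply: funext => x; rewrite mulN1r addNr.
Qed.

Variable val : option (set X * nat) -> R[i].

(* By [comb_val_eq] the chosen representative is irrelevant, and every test
   function lies in the span ([in_span_test]). *)
Definition span_functional (f : X -> R[i]) : R[i] :=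
  if pselect (in_span f) is left e then comb_val val (s2val (cid2 e)) else 0.

Lemma span_functional_comb r : basis_seq r -> span_functional (comb r) = comb_val val r.
Proof.
move=> hr; rewrite /span_functional; case: pselect => [e|[]]; last by exists r.
by case: (cid2 e) => r' hr' /= rr'; apply: comb_val_eq.
Qed.

Lemma span_functional_basis m : basis_idx m -> span_functional (basis_fun m) = val m.
Proof.
move=> hm; have -> : basis_fun m = comb [:: (1, m)].
  by apply: funext => x; rewrite /comb big_seq1 mul1r.
by rewrite span_functional_comb /comb_val ?big_seq1 ?mul1r // => p; rewrite inE => /eqP ->.
Qed.

Lemma span_functional_genfun : is_genfun dist span_functional.
Proof.
move=> a f g /in_span_test[r hr ->] /in_span_test[t ht ->].
rewrite -comb_linE !span_functional_comb ?comb_val_linE //.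
exact: basis_seq_lin.
Qed.

Lemma genfun_eq_span_functional v : is_genfun dist v ->
  (forall m, basis_idx m -> v (basis_fun m) = val m) ->
  forall f, is_test dist f -> v f = span_functional f.
Proof.
move=> gv vb f /in_span_test[r hr ->]; rewrite span_functional_comb //.
elim: r hr => [_|p r IH /basis_seq_cons[hp hr]].
  have -> : comb [::] = (fun=> 0) by apply: funext => x; rewrite /comb big_nil.
  by rewrite (genfun0 gv) /comb_val big_nil.
rewrite comb_cons gv; last 2 first.
- exact: is_test_basis.
- exact: is_test_comb.
by rewrite vb // IH // /comb_val big_cons.
Qed.

End Span.

Theorem mainTheorem1 (R : realType) (d : measure_display) (X : measurableType d)
  (dist : X -> X -> R) (nu : {measure set X -> \bar R})
  (Psi : set X -> nat -> X -> R[i]) :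
  ultrametric dist -> regular dist -> borel_of_dist dist ->
  (forall I J, posball dist I -> maxsub dist J I -> (0 < nu J)%E) ->
  (forall I, posball dist I -> (nu I < +oo)%E) ->
  wavelet_basis dist nu Psi ->
  forall I0 : set X, vertex dist I0 -> (0 < nu I0)%E ->
  forall (u0 : R[i]) (uw : set X -> nat -> R[i]),
  exists u : (X -> R[i]) -> R[i],
    [/\ is_genfun dist u,
        u (chi I0) = u0 * ((fine (nu I0))%:C)%C,
        (forall I j, posball dist I -> (j < (nsub dist I).-1)%N ->
           u (fun x => (Psi I j x)^*) = uw I j) &
        (forall v : (X -> R[i]) -> R[i], is_genfun dist v ->
           v (chi I0) = u0 * ((fine (nu I0))%:C)%C ->
           (forall I j, posball dist I -> (j < (nsub dist I).-1)%N ->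
              v (fun x => (Psi I j x)^*) = uw I j) ->
           forall f, is_test dist f -> v f = u f)].
Proof.
move=> um reg borel mpos pfin wb I0 vI0 nI0 u0 uw.
pose val m := if m is Some (B, j) then uw B j else u0 * (fine (nu I0))%:C%C.
have basisE := span_functional_basis _ _ _ _ um reg borel pfin wb vI0 nI0 val.
exists (span_functional dist Psi I0 val); split.
- exact: (span_functional_genfun _ _ _ _ um reg borel pfin wb vI0 nI0 mpos).
- exact: (basisE None).
- by move=> I j pI jI; apply: (basisE (Some (I, j))).
- move=> v gv vI0' vw.
  apply: (genfun_eq_span_functional _ _ _ _ um reg borel pfin wb vI0 nI0 mpos) => //.
  by case=> [[B j] [pB jB]|_] //=; exact: vw.
Qed.
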